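(* Let $K$ be a $p$-adic field. Then for each positive integer $n$ there exists a totally ramified field extension $L\geq K$ of degree $pn$ such that no compatible system of angular component maps on $L$ restricts to a compatible system of angular component maps on $K$.
   Context: A $p$-adic field is a finite extension of $\mathbb{Q}_p$. For a valued field $K$ with valuation ring $\mathcal{O}_K$ and maximal ideal $\mathcal{M}_K$ and $N\ge1$, let $R_N=\mathcal{O}_K/(N\mathcal{M}_K)$. An angular component map $\mathrm{ac}_N\colon K\to R_N$ is a multiplicative homomorphism $K^\times\to R_N^\times$ whose restriction to $\mathcal{O}_K^\times$ is the natural projection, extended by $\mathrm{ac}_N(0)=0$; a family $(\mathrm{ac}_N)_{N\ge1}$ is a compatible system if it commutes with the projections $R_{NM}\to R_N$. A system on $L$ restricts to one on $K$ if $\mathrm{ac}_N(K)\subseteq\mathcal{O}_K/(N\mathcal{M}_K)\subseteq\mathcal{O}_L/(N\mathcal{M}_L)$ for all $N$ (so that the restrictions are angular component maps on $K$). *)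

From HB Require Import structures.
From mathcomp Require Import all_boot all_order all_algebra all_field.
Set Implicit Arguments. Unset Strict Implicit. Unset Printing Implicit Defensive.
Import Order.TTheory GRing.Theory Num.Theory.
Local Open Scope ring_scope.

Section Valued.
Variable F : fieldType.

(* A normalized discrete valuation v : F^x ->> Z (the value at 0 is junk;
   0 is treated as having valuation +oo everywhere below). *)
Definition is_dval (v : F -> int) : Prop :=
  [/\ (forall x y : F, x != 0 -> y != 0 -> v (x * y) = v x + v y),
      (forall x y : F, x != 0 -> y != 0 -> x + y != 0 ->
          Num.min (v x) (v y) <= v (x + y)) &
      (exists x : F, x != 0 /\ v x = 1)].

Definition vge (v : F -> int) (k : int) (x : F) : bool := (x == 0) || (k <= v x).

Definition in_O (v : F -> int) (x : F) : bool := vge v 0 x.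

Definition dv_complete (v : F -> int) : Prop :=
  forall a : nat -> F,
    (forall k : int, exists N : nat, forall m n : nat,
        (N <= m)%N -> (N <= n)%N -> vge v k (a m - a n)) ->
    exists l : F, forall k : int, exists N : nat, forall n : nat,
        (N <= n)%N -> vge v k (a n - l).

(* A p-adic field (finite extension of Q_p), characterized as a complete
   discretely valued field of characteristic 0 whose residue field is finite
   of characteristic p. *)
Definition padic_field (p : nat) (v : F -> int) : Prop :=
  [/\ prime p, is_dval v, dv_complete v,
      (forall m : nat, (0 < m)%N -> m%:R != 0 :> F) /\ 0 < v p%:R &
      (exists s : seq F, forall x : F, in_O v x ->
          exists2 y, y \in s & vge v 1 (x - y))].

(* a = b in R_N = O_F / (N M_F), i.e. a - b in N M_F = {x | v x >= v N + 1} *)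
Definition cong (v : F -> int) (N : nat) (a b : F) : bool :=
  vge v (v N%:R + 1) (a - b).

(* ac : F -> R_N, represented by representatives in O_F. *)
Definition is_ac (v : F -> int) (N : nat) (ac : F -> F) : Prop :=
  [/\ (forall x, in_O v (ac x)),
      (forall x, x != 0 -> exists u, in_O v u /\ cong v N (ac x * u) 1),
      (forall x y, x != 0 -> y != 0 -> cong v N (ac (x * y)) (ac x * ac y)),
      (forall x, x != 0 -> v x = 0 -> cong v N (ac x) x) &
      cong v N (ac 0) 0].

Definition compatible_ac (v : F -> int) (ac : nat -> F -> F) : Prop :=
  (forall N, (0 < N)%N -> is_ac v N (ac N)) /\
  (forall N M x, (0 < N)%N -> (0 < M)%N -> cong v N (ac (N * M)%N x) (ac N x)).

End Valued.

(* A system on L restricts to K : ac_N(K) lies in O_K/(N M_K) inside O_L/(N M_L). *)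
Definition restricts (K : fieldType) (L : fieldExtType K)
    (v : K -> int) (w : L -> int) (ac : nat -> L -> L) : Prop :=
  forall N : nat, (0 < N)%N -> forall x : K,
    exists y : K, in_O v y /\ cong w N (ac N (x%:A)) (y%:A).

(* Let pi be a uniformizer of K, e = p n, and L = K[X]/(h) with
   h = X^e - pi (X + 1).  Give the monomial c X^i the weight e v(c) + i.
   Weights of monomials with distinct indices below e differ modulo e, so
   every nonzero reduced polynomial has a unique monomial of minimal weight;
   this survives products and reduction modulo h, so the minimal weight is a
   discrete valuation w on L extending e v, with w(a) = 1 for the class a of
   X, and h (whose minimal weight e is attained twice) is irreducible.
   Now a^e = pi (a + 1).  If ac_p(pi) = y lies in K, then c = ac_p(a^n)
   satisfies c^p = y (a + 1) modulo M_L^2.  But c is congruent modulo M_L to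
   some d in K, and since p lies in M_L, d^p = c^p modulo M_L^2.  The
   coefficient of a in d^p - y (a + 1) is the unit -y, so this difference has
   valuation at most 1: a contradiction. *)

From HB Require Import structures.
From mathcomp Require Import all_boot all_order all_algebra all_field.
From mathcomp Require Import zify ring.
Import Order.TTheory GRing.Theory Num.Theory.
Import Pdiv.Ring Pdiv.RingMonic.
Set Implicit Arguments. Unset Strict Implicit. Unset Printing Implicit Defensive.
Local Open Scope ring_scope.

(** * Discrete valuations *)

Section DiscreteValuation.
Variables (F : fieldType) (w : F -> int).
Hypothesis hw : is_dval w.

Lemma dvalM (x y : F) : x != 0 -> y != 0 -> w (x * y) = w x + w y.
Proof. by case: hw => wM _ _; apply: wM. Qed.

Lemma dval1 : w 1 = 0.
Proof. by have := @dvalM 1 1 (oner_neq0 _) (oner_neq0 _); rewrite mulr1; lia. Qed.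

Lemma dvalN (x : F) : x != 0 -> w (- x) = w x.
Proof.
move=> x0; have N10 : (-1 : F) != 0 by rewrite oppr_eq0 oner_neq0.
have := dvalM N10 N10; rewrite mulrNN mulr1 dval1 => wN1.
by rewrite -mulN1r dvalM // (_ : w (-1) = 0) ?add0r //; lia.
Qed.

Lemma vge_0 k : vge w k 0.
Proof. by rewrite /vge eqxx. Qed.

Lemma vgeW k k' (x : F) : k' <= k -> vge w k x -> vge w k' x.
Proof. by rewrite /vge; case: (x == 0) => //= ? ?; lia. Qed.

Lemma vge_1 : vge w 0 1.
Proof. by rewrite /vge dval1 orbT. Qed.

Lemma not_vge1_1 : ~~ vge w 1 1.
Proof. by rewrite /vge oner_eq0 dval1. Qed.

Lemma vgeN k (x : F) : vge w k (- x) = vge w k x.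
Proof. by rewrite /vge oppr_eq0; case: eqVneq => //= x0; rewrite dvalN. Qed.

Lemma vgeD k (x y : F) : vge w k x -> vge w k y -> vge w k (x + y).
Proof.
rewrite /vge; have [->|x0] := eqVneq x 0; first by rewrite add0r.
have [->|y0] := eqVneq y 0; first by rewrite addr0 (negPf x0).
have [//|xy0 /= kx ky] := eqVneq (x + y) 0.
by case: hw => _ wD _; apply: (le_trans _ (wD x y x0 y0 xy0)); rewrite le_min kx ky.
Qed.

Lemma vgeB k (x y : F) : vge w k x -> vge w k y -> vge w k (x - y).
Proof. by move=> kx ky; rewrite vgeD // vgeN. Qed.

Lemma vgeM k k' (x y : F) : vge w k x -> vge w k' y -> vge w (k + k') (x * y).
Proof.
rewrite /vge mulf_eq0; have [//|x0] := eqVneq x 0; have [//|y0 /=] := eqVneq y 0.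
by rewrite dvalM // => kx ky; rewrite lerD.
Qed.

Lemma vgeX k (x : F) m : 0 <= k -> vge w k x -> vge w (k * m%:Z) (x ^+ m).
Proof.
move=> k0 kx; elim: m => [|m IHm]; first by rewrite expr0 mulr0 vge_1.
by rewrite exprS (_ : k * m.+1%:Z = k + k * m%:Z) ?vgeM //; lia.
Qed.

Lemma vge_sum k (I : Type) (r : seq I) (P : pred I) (f : I -> F) :
  (forall i, P i -> vge w k (f i)) -> vge w k (\sum_(i <- r | P i) f i).
Proof. by move=> kf; apply: (big_ind (vge w k)); [apply: vge_0 | apply: vgeD |]. Qed.

Lemma vge_nat m : vge w 0 m%:R.
Proof. by elim: m => [|m IHm]; rewrite ?vge_0 // mulrS vgeD // vge_1. Qed.

Lemma dvalD_eq (x y : F) : x != 0 -> vge w (w x + 1) y -> x + y != 0 /\ w (x + y) = w x.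
Proof.
move=> x0 xy; have not_vge_x : ~~ vge w (w x + 1) x by rewrite /vge (negPf x0) -ltNge ltzD1.
have xy0 : x + y != 0.
  by apply: contraTneq xy => /eqP; rewrite addr_eq0 => /eqP xE; rewrite -vgeN -xE.
split => //; apply/eqP; rewrite eq_le.
have xx : vge w (w x) x by rewrite /vge lexx orbT.
have := vgeD xx (vgeW (lerDl (w x) 1 : w x <= w x + 1) xy); rewrite /vge (negPf xy0) /= => ->.
rewrite andbT; apply: contraT; rewrite -ltNge -lezD1 => ltxy; apply: contraNT not_vge_x => _.
by rewrite -[X in vge _ _ X](addrK y) vgeB // /vge ltxy orbT.
Qed.

Lemma vge_subC k (x y : F) : vge w k (x - y) = vge w k (y - x).
Proof. by rewrite -vgeN opprB. Qed.

Lemma vge_sub_trans k (x y z : F) :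
  vge w k (x - y) -> vge w k (y - z) -> vge w k (x - z).
Proof. by move=> kxy kyz; rewrite -(subrKA y) addrC vgeD. Qed.

Lemma vge_subMr k (x y z : F) :
  vge w k (x - y) -> vge w 0 z -> vge w k (x * z - y * z).
Proof. by move=> kxy kz; rewrite -mulrBl -[k]addr0 vgeM. Qed.

Lemma vge_subMl k (x y z : F) :
  vge w k (x - y) -> vge w 0 z -> vge w k (z * x - z * y).
Proof. by rewrite ![z * _]mulrC; apply: vge_subMr. Qed.

Lemma vge_sub_expp (p : nat) (x y : F) : prime p -> vge w 1 p%:R ->
  vge w 0 y -> vge w 1 (x - y) -> vge w 2 (x ^+ p - y ^+ p).
Proof.
move=> p_pr p1 y0 xy1; have p_gt1 := prime_gt1 p_pr.
have xy0 : vge w 0 (x - y) by apply: vgeW xy1.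
have -> : x = y + (x - y) by rewrite addrC subrK.
rewrite exprDn big_ord_recl subn0 expr0 mulr1 bin0 mulr1n addrC addKr.
apply: vge_sum => -[i ip] _ /=; change (bump 0 i) with i.+1.
have [ltip | ip'] := ltnP i.+1 p.
- have /dvdnP[c ->] : (p %| 'C(p, i.+1))%N by apply: prime_dvd_bin; lia.
  set t := _ * _; have -> : t *+ (c * p) = t * c%:R * p%:R.
    by rewrite -mulr_natr natrM mulrA.
  apply: (@vgeM 1 1) => //; rewrite -[1]addr0 vgeM ?vge_nat //.
  rewrite -[1]add0r vgeM //; first by have := vgeX (p - i.+1) (lexx 0) y0; rewrite mul0r.
  by apply: (vgeW _ (vgeX i.+1 _ xy1)) => //; lia.
- have -> : i = p.-1 by lia.
  rewrite prednK ?prime_gt0 // subnn expr0 mul1r binn mulr1n.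
  by apply: (vgeW _ (vgeX p _ xy1)) => //; lia.
Qed.

End DiscreteValuation.

(** * Angular components *)

Section AngularComponent.
Variables (F : fieldType) (w : F -> int) (N : nat) (ac : F -> F) (k : int).
Hypotheses (hw : is_dval w) (hac : is_ac w N ac) (hk : k <= w N%:R + 1).

Lemma congW (x y : F) : cong w N x y -> vge w k (x - y).
Proof. exact: vgeW. Qed.

Lemma ac_in_O (x : F) : vge w 0 (ac x).
Proof. by case: hac => acO *; apply: acO. Qed.

Lemma ac_expS (x : F) m : x != 0 -> vge w k (ac (x ^+ m.+1) - ac x ^+ m.+1).
Proof.
case: hac => _ _ acM _ _ x0; elim: m => [|m IHm]; first by rewrite subrr vge_0.
rewrite exprS [ac x ^+ _]exprS; apply: (vge_sub_trans hw (y := ac x * ac (x ^+ m.+1))).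
  by apply: congW; rewrite acM // expf_neq0.
by apply: (vge_subMl hw); last exact: ac_in_O.
Qed.

Lemma ac_expS_unit (b x u : F) m : x != 0 -> u != 0 -> w u = 0 ->
  b ^+ m.+1 = x * u -> vge w k (ac b ^+ m.+1 - ac x * u).
Proof.
case: hac => _ _ acM acU _ x0 u0 wu bxu.
have b0 : b != 0 by apply: contraNneq (mulf_neq0 x0 u0) => b0; rewrite -bxu b0 expr0n.
apply: (vge_sub_trans hw (y := ac (b ^+ m.+1))); first by rewrite (vge_subC hw) ac_expS.
rewrite bxu; apply: (vge_sub_trans hw (y := ac x * ac u)); first exact/congW/acM.
by apply: (vge_subMl hw); [exact: congW (acU _ u0 wu) | exact: ac_in_O].
Qed.

Lemma ac_congr_not_vge1 (x y : F) : 1 <= k -> x != 0 -> cong w N (ac x) y -> ~~ vge w 1 y.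
Proof.
case: hac => _ acV _ _ _ k1 x0 acxy; have [u [uO acxu]] := acV x x0.
apply: contra (not_vge1_1 hw) => y1.
have acx1 : vge w 1 (ac x) by rewrite -(subrK y (ac x)) vgeD // (vgeW k1 (congW acxy)).
have := vgeB hw (vgeM hw acx1 uO) (vgeW k1 (congW acxu)).
by rewrite addr0 opprB addrC subrK.
Qed.

End AngularComponent.

(** * Weights of polynomial coefficients *)

Lemma coef_neq0_ltn_size (R : nzSemiRingType) (P : {poly R}) i :
  P`_i != 0 -> (i < size P)%N.
Proof. by apply: contraNT; rewrite -leqNgt => /(nth_default 0)->. Qed.

Section TotallyRamifiedExtension.
Variables (K : fieldType) (v : K -> int) (e : nat).
Hypothesis hv : is_dval v.

(* [cwt c i] is the weight of the monomial c X^i, i.e. the valuation that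
   c a^i will have in L; [wt_ge] gives the monomial 0 the weight +oo. *)
Definition cwt (c : K) (i : nat) : int := e%:Z * v c + i%:Z.
Definition wt_ge (W : int) (c : K) (i : nat) : bool := (c == 0) || (W <= cwt c i).
Definition wt_eq (W : int) (c : K) (i : nat) : bool := (c != 0) && (cwt c i == W).

Lemma cwt0 (c : K) : cwt c 0 = e%:Z * v c.
Proof. exact: addr0. Qed.

Lemma wt_ge0 W i : wt_ge W 0 i.
Proof. by rewrite /wt_ge eqxx. Qed.

Lemma wt_geW W W' c i : W' <= W -> wt_ge W c i -> wt_ge W' c i.
Proof. by rewrite /wt_ge => W'W /orP[-> // | /(le_trans W'W) ->]; rewrite orbT. Qed.

Lemma wt_eq_ge W c i : wt_eq W c i -> wt_ge W c i.
Proof. by rewrite /wt_ge /wt_eq => /andP[_ /eqP->]; rewrite lexx orbT. Qed.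

Lemma wt_ge1_index c i : (0 < i < e)%N -> wt_ge 0 c i -> wt_ge 1 c i.
Proof.
rewrite /wt_ge /cwt; case: (c == 0) => //= /andP[i0 ie] c0.
have [vc|vc] := leP 0 (v c); nia.
Qed.

Lemma wt_geS W c i : wt_ge (W + 1) c i.+1 = wt_ge W c i.
Proof. by rewrite /wt_ge /cwt -addn1 PoszD addrA lerD2r. Qed.

Lemma wt_geD W (a b : K) i : wt_ge W a i -> wt_ge W b i -> wt_ge W (a + b) i.
Proof.
rewrite /wt_ge /cwt; have [->|a0] := eqVneq a 0; first by rewrite add0r.
have [->|b0 /= Wa Wb] := eqVneq b 0; first by rewrite addr0 (negPf a0).
have [//|ab0 /=] := eqVneq (a + b) 0.
case: hv => _ vD _; have := vD a b a0 b0 ab0; set m := Num.min _ _ => mab.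
have Wm : W <= e%:Z * m + i%:Z by rewrite /m minEle; case: ifP.
by apply: (le_trans Wm); rewrite lerD2r ler_wpM2l.
Qed.

Lemma wt_ge_sum W i (I : Type) (r : seq I) (P : pred I) (f : I -> K) :
  (forall j, P j -> wt_ge W (f j) i) -> wt_ge W (\sum_(j <- r | P j) f j) i.
Proof.
by move=> Wf; apply: (big_ind (fun c => wt_ge W c i)); [apply: wt_ge0 | move=> *; apply: wt_geD |].
Qed.

Lemma wt_geM W1 W2 (a b : K) i j :
  wt_ge W1 a i -> wt_ge W2 b j -> wt_ge (W1 + W2) (a * b) (i + j).
Proof.
rewrite /wt_ge /cwt mulf_eq0; have [//|a0] := eqVneq a 0; have [//|b0 /=] := eqVneq b 0.
by rewrite dvalM // PoszD mulrDr => W1a W2b; lia.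
Qed.

Lemma wt_eqM W1 W2 (a b : K) i j :
  wt_eq W1 a i -> wt_eq W2 b j -> wt_eq (W1 + W2) (a * b) (i + j).
Proof.
rewrite /wt_eq /cwt => /andP[a0 /eqP<-] /andP[b0 /eqP<-].
by rewrite mulf_neq0 //= dvalM // PoszD mulrDr; apply/eqP; lia.
Qed.

Lemma wt_eqD W (a b : K) i : wt_eq W a i -> wt_ge (W + 1) b i -> wt_eq W (a + b) i.
Proof.
rewrite /wt_eq /wt_ge /cwt => /andP[a0 /eqP<-]; have [->|b0 /=] := eqVneq b 0.
  by rewrite addr0 a0 eqxx.
rewrite -addrA [_ + 1]addrC addrA lerD2r => ltab.
have e0 : (0 < e)%N by apply: contraTT ltab; rewrite -leqNgt leqn0 => /eqP->; rewrite !mul0r add0r.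
have vb : vge v (v a + 1) b.
  by rewrite /vge (negPf b0) /= lezD1 -(ltr_pM2l (_ : 0 < e%:Z)) // -lezD1.
by have [-> ->] := dvalD_eq hv a0 vb; rewrite !eqxx.
Qed.

Lemma cwt_index_inj (c d : K) (i j : nat) :
  (i < e)%N -> (j < e)%N -> cwt c i = cwt d j -> i = j.
Proof.
rewrite /cwt => ie je /(congr1 (fun z => (z %% e%:Z)%Z)).
rewrite ![(e%:Z * _)%R]mulrC !modzMDl !modz_small ?ltz_nat ?ie ?je //.
by move/eqP; rewrite eqz_nat => /eqP.
Qed.

Definition wt_dominant (W : int) (m : nat) (P : {poly K}) : Prop :=
  wt_eq W P`_m m /\ forall i, i != m -> wt_ge (W + 1) P`_i i.

Lemma wt_dominant_ge W m (P : {poly K}) i : wt_dominant W m P -> wt_ge W P`_i i.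
Proof.
case=> Pm Pgt; have [->|im] := eqVneq i m; first exact: wt_eq_ge.
by apply: wt_geW (Pgt i im); rewrite lerDl.
Qed.

Lemma wt_dominant_neq0 W m (P : {poly K}) : wt_dominant W m P -> P != 0.
Proof. by case=> /andP[Pm _] _; apply: contraNneq Pm => ->; rewrite coef0. Qed.

Lemma wt_dominant_index W W' m j (P : {poly K}) : wt_dominant W m P ->
  wt_eq W' P`_j j -> (forall i, wt_ge W' P`_i i) -> j = m.
Proof.
case=> /andP[Pm0 /eqP Pm] Pgt /andP[Pj0 /eqP Pj] W'P; apply/eqP; apply: contraT => jm.
have := W'P m; have := Pgt j jm; rewrite /wt_ge (negPf Pm0) (negPf Pj0) Pm Pj /=.
by move=> ltW'; rewrite leNgt (lt_le_trans _ ltW') // ltzD1.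
Qed.

Lemma wt_ge_coefM W1 W2 (P R : {poly K}) i (j : 'I_i.+1) :
  wt_ge W1 P`_j j -> wt_ge W2 R`_(i - j) (i - j) -> wt_ge (W1 + W2) (P`_j * R`_(i - j)) i.
Proof. by move=> Pj Rj; have := wt_geM Pj Rj; rewrite subnKC // -ltnS. Qed.

Lemma wt_dominantM W1 W2 m1 m2 (P R : {poly K}) :
  wt_dominant W1 m1 P -> wt_dominant W2 m2 R ->
  wt_dominant (W1 + W2) (m1 + m2) (P * R).
Proof.
move=> domP domR; have [Pm Pgt] := domP; have [Rm Rgt] := domR.
have W12 : W1 + 1 + W2 = W1 + W2 + 1 by rewrite addrAC.
split.
- have m1m : (m1 < (m1 + m2).+1)%N by rewrite ltnS leq_addr.
  rewrite coefM (bigD1 (Ordinal m1m)) //=; apply: wt_eqD => //.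
    by have := wt_eqM Pm Rm; rewrite addKn.
  apply: wt_ge_sum => // j /= jm1; rewrite -W12 wt_ge_coefM ?(wt_dominant_ge _ domR) //.
  by apply: Pgt; apply: contraNneq jm1 => jm; apply/eqP/val_inj.
- move=> i im; rewrite coefM; apply: wt_ge_sum => // j _.
  have [jm1 | jm1] := eqVneq (j : nat) m1.
  + rewrite -addrA wt_ge_coefM ?(wt_dominant_ge _ domP) // Rgt //.
    by apply: contraNneq im => <-; rewrite -jm1 subnKC // -ltnS.
  + by rewrite -W12 wt_ge_coefM ?Pgt ?(wt_dominant_ge _ domR).
Qed.

(* For P != 0 the default value is one of the minimised weights; pwt 0 is
   junk. *)
Definition pwt (P : {poly K}) : int :=
  \big[Num.min/cwt (lead_coef P) (size P).-1]_(i < size P | P`_i != 0) cwt P`_i i.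

Lemma pwt_le (P : {poly K}) i : P`_i != 0 -> pwt P <= cwt P`_i i.
Proof.
move=> Pi; have iP := coef_neq0_ltn_size Pi.
exact: (@bigmin_le_cond _ _ _ _ (Ordinal iP) (fun j : 'I_(size P) => P`_j != 0)
  (fun j => cwt P`_j j)).
Qed.

Lemma wt_ge_pwt (P : {poly K}) i : wt_ge (pwt P) P`_i i.
Proof. by rewrite /wt_ge; have [//|Pi /=] := eqVneq P`_i 0; apply: pwt_le. Qed.

Lemma pwt_ge W (P : {poly K}) : P != 0 -> (forall i, wt_ge W P`_i i) -> W <= pwt P.
Proof.
move=> P0 WP; apply/bigmin_geP; split => [|i Pi].
  by have := WP (size P).-1; rewrite /wt_ge -lead_coefE lead_coef_eq0 (negPf P0).
by have := WP i; rewrite /wt_ge (negPf Pi).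
Qed.

Lemma pwt_attained (P : {poly K}) : P != 0 -> exists2 i, P`_i != 0 & pwt P = cwt P`_i i.
Proof.
move=> P0; rewrite /pwt; elim/big_rec: _ => [|i m Pi [j Pj ->]].
  by exists (size P).-1; rewrite // -lead_coefE lead_coef_eq0.
by rewrite minEle; case: ifP => _; [exists i | exists j].
Qed.

Lemma pwt_dominant_eq W m (P : {poly K}) : wt_dominant W m P -> pwt P = W.
Proof.
move=> domP; have [/andP[Pm /eqP Wm] _] := domP.
apply/le_anti; rewrite -{1}Wm pwt_le //= pwt_ge ?(wt_dominant_neq0 domP) // => i.
exact: wt_dominant_ge domP.
Qed.

Lemma pwt_dominant (P : {poly K}) : P != 0 -> (size P <= e)%N -> exists m, wt_dominant (pwt P) m P.
Proof.
move=> P0 sPe; have [m Pm pwtP] := pwt_attained P0; exists m; split.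
  by rewrite /wt_eq Pm pwtP eqxx.
move=> i im; rewrite /wt_ge; have [//|Pi /=] := eqVneq P`_i 0.
rewrite lezD1 lt_neqAle pwt_le // andbT pwtP.
have ltPe j : P`_j != 0 -> (j < e)%N.
  by move/coef_neq0_ltn_size/leq_trans; apply.
by apply: contra im => /eqP/cwt_index_inj ->; rewrite ?ltPe.
Qed.

(** * The extension L = K[X]/(X^e - pi (X + 1)) *)

Variable pi : K.
Hypotheses (e_gt1 : (1 < e)%N) (pi0 : pi != 0) (vpi : v pi = 1).

Lemma wt_ge_piM W c i : wt_ge W (pi * c) i = wt_ge W c (i + e).
Proof.
rewrite /wt_ge /cwt mulf_eq0 (negPf pi0) /=; have [//|c0 /=] := eqVneq c 0.
by rewrite dvalM // vpi PoszD; congr (_ <= _); ring.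
Qed.

Lemma wt_eq_piM W c i : wt_eq W (pi * c) i = wt_eq W c (i + e).
Proof.
rewrite /wt_eq /cwt mulf_eq0 (negPf pi0) /=; have [//|c0 /=] := eqVneq c 0.
by rewrite dvalM // vpi PoszD; congr (_ == _); ring.
Qed.

Definition hpol : {poly K} := 'X^e - pi *: ('X + 1).

Lemma size_hpol : size hpol = e.+1.
Proof.
by rewrite size_polyDl ?size_polyXn // size_polyN size_scale // size_XaddC.
Qed.

Lemma monic_hpol : hpol \is monic.
Proof.
by rewrite monicE lead_coefDl ?lead_coefXn // size_polyN size_scale // size_XaddC size_polyXn.
Qed.

Lemma coef_hpol i : hpol`_i = (i == e)%:R - pi * ((i == 1)%:R + (i == 0)%:R).
Proof. by rewrite coefB coefXn coefZ coefD coefX coef1. Qed.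

Lemma hpol_not_dominant W m : ~ wt_dominant W m hpol.
Proof.
move=> dom; have e0 : e != 0%N by rewrite -lt0n ltnW.
have cwt_pi i : cwt (- pi) i = e%:Z + i%:Z by rewrite /cwt dvalN // vpi mulr1.
have hpol_ge i : wt_ge e%:Z hpol`_i i.
  rewrite coef_hpol /wt_ge; have [->|ie] := eqVneq i e.
    by rewrite (gtn_eqF e_gt1) (negPf e0) /= addr0 mulr0 subr0 /cwt dval1 // mulr0 add0r lexx orbT.
  case: i ie => [|[|i]] _ /=; rewrite ?addr0 ?add0r ?mulr0 ?mulr1 ?sub0r ?subr0 ?oppr0 ?eqxx //;
    by rewrite oppr_eq0 (negPf pi0) cwt_pi /=; lia.
have hpol0 : wt_eq e%:Z hpol`_0 0.
  rewrite coef_hpol eq_sym (negPf e0) /= !add0r mulr1 /wt_eq oppr_eq0 pi0 cwt_pi /=.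
  by apply/eqP; lia.
have hpole : wt_eq e%:Z hpol`_e e.
  rewrite coef_hpol eqxx (gtn_eqF e_gt1) (negPf e0) /= addr0 mulr0 subr0.
  by rewrite /wt_eq oner_neq0 /cwt dval1 // mulr0 add0r eqxx.
have := wt_dominant_index dom hpol0 hpol_ge; have := wt_dominant_index dom hpole hpol_ge.
by move=> <- /eqP; rewrite eq_sym (negPf e0).
Qed.

Lemma hpol_irr : irreducible_poly hpol.
Proof.
split; first by rewrite size_hpol ltnS ltnW.
move=> q q1 qh.
have h0 : hpol != 0 by rewrite -size_poly_gt0 size_hpol.
have [r hqr] : exists r : {poly K}, r * q = hpol by exists (hpol %/ q); apply: divpK.
have q0 : q != 0 by apply: contraNneq h0 => q0; rewrite -hqr q0 mulr0.
have r0 : r != 0 by apply: contraNneq h0 => r0; rewrite -hqr r0 mul0r.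
have sz : (size r + size q = e.+2)%N.
  by rewrite -size_hpol -hqr size_mul // prednK // addn_gt0 size_poly_gt0 r0.
have [qe|qe] := eqVneq (size q) e.+1; first by rewrite -dvdp_size_eqp // qe size_hpol.
have [r_gt0 q_gt0] : (0 < size r)%N /\ (0 < size q)%N by rewrite !size_poly_gt0 r0.
have sre : (size r <= e)%N by move: q1 => /eqP; lia.
have sqe : (size q <= e)%N by move: qe => /eqP; lia.
have [[m1 domr] [m2 domq]] := (pwt_dominant r0 sre, pwt_dominant q0 sqe).
by have := wt_dominantM domr domq; rewrite hqr => /hpol_not_dominant.
Qed.

Definition hpol_mi : monic_irreducible_poly hpol := (hpol_irr, monic_hpol).

Definition L : fieldExtType K := {poly %/ hpol with hpol_mi}.

Definition wL (x : L) : int := pwt x.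

Lemma dim_L : \dim (fullv : {vspace L}) = e.
Proof. by rewrite dim_polyn (mk_monicE hpol_mi) size_hpol. Qed.

Lemma size_L (x : L) : (size (x : {poly K}) <= e)%N.
Proof.
have sh : size (mk_monic hpol) = e.+1 by rewrite (mk_monicE hpol_mi) size_hpol.
by rewrite -ltnS -sh size_mk_monic.
Qed.

Lemma rmodp_hpol (P : {poly K}) : (size P < e + e)%N ->
  rmodp P hpol = take_poly e P + pi *: ('X + 1) * drop_poly e P.
Proof.
move=> sP; rewrite -{1}(poly_take_drop e P) [take_poly e P + _]addrC.
have -> : 'X^e = hpol + pi *: ('X + 1) by rewrite /hpol subrK.
rewrite mulrDr -addrA (rmodp_addl_mul_small monic_hpol); first by rewrite addrC mulrC.
rewrite size_hpol ltnS (leq_trans (size_polyD _ _)) // geq_max size_take_poly andbT.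
rewrite (leq_trans (size_polyMleq _ _)) // size_scale // size_XaddC.
by rewrite size_drop_poly natn; move: sP; set s := size P; lia.
Qed.

Lemma coef_rmodp_hpol (P : {poly K}) k : (size P < e + e)%N -> (k < e)%N ->
  (rmodp P hpol)`_k = P`_k + pi * P`_(k + e) + pi * ('X * drop_poly e P)`_k.
Proof.
move=> sP ke; rewrite rmodp_hpol // coefD coef_take_poly ke -scalerAl coefZ.
by rewrite mulrDl mul1r coefD coef_drop_poly mulrDr [_ + pi * _]addrC addrA.
Qed.

Lemma wt_ge_XdropM W (P : {poly K}) k : (forall j, wt_ge W P`_j j) ->
  wt_ge (W + 1) (pi * ('X * drop_poly e P)`_k) k.
Proof.
move=> WP; rewrite wt_ge_piM coefXM; case: k => [|k] /=; first exact: wt_ge0.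
by rewrite coef_drop_poly addSn wt_geS.
Qed.

(* Reduction replaces c X^(k + e) by pi c (X^k + X^(k + 1)): the same weight
   at X^k and a larger one at X^(k + 1). *)
Lemma wt_dominant_rmodp W m (P : {poly K}) : (size P < e + e)%N ->
  wt_dominant W m P -> wt_dominant W (m %% e) (rmodp P hpol).
Proof.
move=> sP domP; have [/andP[Pm0 _] Pgt] := domP; have [Pm _] := domP.
have e0 : (0 < e)%N by apply: ltnW.
have lt_m2e : (m < e + e)%N := ltn_trans (coef_neq0_ltn_size Pm0) sP.
have Xdrop k := wt_ge_XdropM k (fun j => wt_dominant_ge j domP).
split.
- rewrite coef_rmodp_hpol ?ltn_pmod //; apply: wt_eqD (Xdrop _).
  have [lt_me | le_em] := ltnP m e.
    rewrite modn_small //; apply: wt_eqD Pm _; rewrite wt_ge_piM Pgt //.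
    by rewrite -{2}(addn0 m) eqn_add2l -lt0n.
  have mE : (m %% e + e = m)%N.
    by rewrite -{1}(subnK le_em) modnDr modn_small ?subnK //; lia.
  rewrite addrC; apply: wt_eqD; first by rewrite wt_eq_piM mE.
  by apply: Pgt; rewrite neq_ltn (leq_trans (ltn_pmod _ e0) le_em).
- move=> k km; have [ke | ek] := ltnP k e; last first.
    rewrite nth_default ?wt_ge0 // (leq_trans _ ek) // -ltnS -size_hpol ltn_rmodpN0 //.
    by rewrite -size_poly_gt0 size_hpol.
  rewrite coef_rmodp_hpol //; apply: wt_geD (Xdrop _); apply: wt_geD.
    by apply: Pgt; apply: contraNneq km => <-; rewrite modn_small.
  by rewrite wt_ge_piM Pgt //; apply: contraNneq km => <-; rewrite modnDr modn_small.
Qed.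

Lemma polyL_eq0 (x : L) : ((x : {poly K}) == 0) = (x == 0).
Proof. by []. Qed.

Lemma polyL_mul (x y : L) : ((x * y : L) : {poly K}) = rmodp ((x : {poly K}) * y) hpol.
Proof. by rewrite poly_of_qpolyM [X in rmodp _ X](mk_monicE hpol_mi). Qed.

Lemma polyL_alg (c : K) : ((c%:A : L) : {poly K}) = c%:P.
Proof. by rewrite poly_of_qpolyZ (qpolyCE hpol 1) polyC1 alg_polyC. Qed.

Lemma polyL1 : ((1 : L) : {poly K}) = 1.
Proof. by rewrite (qpolyCE hpol 1) polyC1. Qed.

Lemma polyL_X : (('qX : L) : {poly K}) = 'X.
Proof. by apply: qpolyXE; rewrite ?monic_hpol // size_hpol ltnS. Qed.

Lemma wL_mul (x y : L) : x != 0 -> y != 0 -> wL (x * y) = wL x + wL y.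
Proof.
rewrite -!polyL_eq0 => x0 y0.
have [[m1 domx] [m2 domy]] := (pwt_dominant x0 (size_L x), pwt_dominant y0 (size_L y)).
rewrite /wL polyL_mul (pwt_dominant_eq (wt_dominant_rmodp _ (wt_dominantM domx domy))) //.
have := size_polyMleq (x : {poly K}) y; have := size_L x; have := size_L y; lia.
Qed.

Lemma wL_add (x y : L) : x + y != 0 -> Num.min (wL x) (wL y) <= wL (x + y).
Proof.
rewrite -polyL_eq0 => xy0; apply: pwt_ge => // i; rewrite coefD.
by apply: wt_geD; apply: wt_geW (wt_ge_pwt _ i); rewrite ge_min lexx ?orbT.
Qed.

Lemma wt_dominantC (c : K) : c != 0 -> wt_dominant (e%:Z * v c) 0 c%:P.
Proof.
move=> c0; split=> [|i i0]; first by rewrite coefC eqxx /wt_eq c0 cwt0 eqxx.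
by rewrite coefC (negPf i0) wt_ge0.
Qed.

Lemma wt_dominantX : wt_dominant 1 1 'X.
Proof.
split=> [|i i1]; first by rewrite coefX eqxx /wt_eq oner_neq0 /cwt dval1 // mulr0 add0r.
by rewrite coefX (negPf i1) wt_ge0.
Qed.

Lemma wt_dominantXaddC1 : wt_dominant 0 0 ('X + 1).
Proof.
split=> [|[|[|i]] // _]; rewrite coefD coefX coef1 /= ?add0r ?addr0 ?wt_ge0 //.
  by rewrite /wt_eq oner_neq0 /cwt dval1 // mulr0 addr0.
by rewrite /wt_ge oner_eq0 /cwt dval1 // mulr0 add0r.
Qed.

Lemma wL_alg (c : K) : c != 0 -> wL c%:A = e%:Z * v c.
Proof. by move=> c0; rewrite /wL polyL_alg (pwt_dominant_eq (wt_dominantC c0)). Qed.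

Lemma wL_X : wL 'qX = 1.
Proof. by rewrite /wL polyL_X (pwt_dominant_eq wt_dominantX). Qed.

Lemma wL_XaddC1 : wL ('qX + 1) = 0.
Proof.
by rewrite /wL poly_of_qpolyD polyL_X polyL1 (pwt_dominant_eq wt_dominantXaddC1).
Qed.

Lemma dval_wL : is_dval wL.
Proof.
split; [exact: wL_mul | by move=> x y _ _; apply: wL_add | exists 'qX].
by rewrite -polyL_eq0 polyL_X polyX_eq0 wL_X.
Qed.

Lemma qX_expe : ('qX : L) ^+ e = pi%:A * ('qX + 1).
Proof.
rewrite mulr_algl; apply: val_inj.
change (((('qX : L) ^+ e : L) : {poly K}) = ((pi *: ('qX + 1) : L) : {poly K})).
rewrite poly_of_qpolyX [X in rmodp _ X](mk_monicE hpol_mi) poly_of_qpolyZ poly_of_qpolyD.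
rewrite polyL_X polyL1.
have -> : 'X^e = 1 * hpol + pi *: ('X + 1 : {poly K}) by rewrite mul1r subrK.
by rewrite (rmodp_addl_mul_small monic_hpol) // size_hpol ltnS size_scale // size_XaddC natn.
Qed.

Lemma residue_const (d : L) : vge wL 0 d -> exists c : K, vge wL 1 (d - c%:A).
Proof.
move=> d0; set c := (d : {poly K})`_0; exists c.
rewrite /vge; have [//|dc0 /=] := eqVneq (d - c%:A) 0.
have dge i : wt_ge 0 (d : {poly K})`_i i.
  move: d0; rewrite /vge; have [->|_ /= /wt_geW] := eqVneq d 0; first by rewrite coef0 wt_ge0.
  by apply; apply: wt_ge_pwt.
apply: pwt_ge; first by rewrite polyL_eq0.
have -> : ((d - c%:A : L) : {poly K}) = (d : {poly K}) - c%:P by rewrite -polyL_alg.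
move=> [|i]; rewrite coefB coefC ?subrr ?wt_ge0 //= subr0.
have [ie|ei] := ltnP i.+1 e; first exact: wt_ge1_index (dge _).
by rewrite nth_default ?wt_ge0 // (leq_trans (size_L d)).
Qed.

Lemma not_vge2_sub_XaddC1 (c y : K) :
  ~~ vge wL 1 y%:A -> ~~ vge wL 2 (c%:A - y%:A * ('qX + 1)).
Proof.
move=> y1; have y0 : y != 0 by apply: contraNneq y1 => ->; rewrite scale0r vge_0.
move: y1; rewrite /vge -in_algE fmorph_eq0 (negPf y0) wL_alg //= -ltNge => vy.
set z := _ - _; have zP : (z : {poly K}) = c%:P - y *: ('X + 1).
  by rewrite /z mulr_algl -polyL_alg -polyL_X -polyL1.
have z1 : (z : {poly K})`_1 = - y.
  by rewrite zP coefB coefC coefZ coefD coefX coef1 /= sub0r addr0 mulr1.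
have z0 : (z : {poly K}) != 0.
  by apply: contra_neq y0 => z0; apply/eqP; rewrite -oppr_eq0 -z1 z0 coef0.
rewrite -polyL_eq0 (negPf z0) /= -ltNge.
apply: (le_lt_trans (pwt_le (_ : (z : {poly K})`_1 != 0))); first by rewrite z1 oppr_eq0.
by rewrite z1 /cwt dvalN //; lia.
Qed.

Variables (p n : nat).
Hypotheses (p_pr : prime p) (e_pn : e = (p * n)%N) (p0 : p%:R != 0 :> K) (vp : 0 < v p%:R).

Lemma L_no_restricting_ac (ac : nat -> L -> L) : compatible_ac wL ac -> ~ restricts v wL ac.
Proof.
move=> [acN _] res; have p_gt0 := prime_gt0 p_pr; have hac := acN p p_gt0.
have pA : (p%:R : L) = (p%:R : K)%:A by rewrite -in_algE rmorph_nat.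
have wp : 1 <= wL p%:R by rewrite pA wL_alg //; nia.
have pM : vge wL 1 p%:R by rewrite /vge wp orbT.
have lvl2 : 2 <= wL p%:R + 1 by lia.
set a : L := 'qX.
have a1_0 : a + 1 != 0.
  by rewrite -polyL_eq0 poly_of_qpolyD polyL_X polyL1 -size_poly_eq0 size_XaddC.
have a1O : vge wL 0 (a + 1) by rewrite /vge wL_XaddC1 lexx orbT.
have piA0 : (pi%:A : L) != 0 by rewrite -in_algE fmorph_eq0.
have [y [_ acy]] := res p p_gt0 pi.
have y_unit : ~~ vge wL 1 y%:A by apply: (ac_congr_not_vge1 dval_wL hac lvl2) acy.
have acp : vge wL 2 (ac p (a ^+ n) ^+ p - ac p pi%:A * (a + 1)).
  have := ac_expS_unit dval_wL hac lvl2 (b := a ^+ n) (m := p.-1) piA0 a1_0 wL_XaddC1.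
  by rewrite prednK // -exprM mulnC -e_pn qX_expe; apply.
have [d] := residue_const (ac_in_O hac (a ^+ n)); rewrite (vge_subC dval_wL) => hd.
have frob := vge_sub_expp dval_wL p_pr pM (ac_in_O hac _) hd.
apply: (negP (not_vge2_sub_XaddC1 (d ^+ p) y_unit)).
have -> : (d ^+ p)%:A = d%:A ^+ p :> L by rewrite -!in_algE rmorphXn.
apply: (vge_sub_trans dval_wL frob); apply: (vge_sub_trans dval_wL acp).
exact: (vge_subMr dval_wL (congW lvl2 acy) a1O).
Qed.

End TotallyRamifiedExtension.

Theorem proposition3p3 (p : nat) (K : fieldType) (v : K -> int) :
  padic_field p v ->
  forall n : nat, (0 < n)%N ->
  exists (L : fieldExtType K) (w : L -> int),
    [/\ \dim (fullv : {vspace L}) = (p * n)%N,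
        is_dval w,
        (forall x : K, x != 0 -> w (x%:A) = (p * n)%:Z * v x) &
        (forall ac : nat -> L -> L, compatible_ac w ac -> ~ restricts v w ac)].
Proof.
move=> [p_pr hv _ [char0 vp] _] n n_gt0.
have [pi [pi0 vpi]] : exists pi : K, pi != 0 /\ v pi = 1 by case: hv.
have e_gt1 : (1 < p * n)%N by rewrite (leq_trans (prime_gt1 p_pr)) // leq_pmulr.
exists (L hv e_gt1 pi0 vpi), (@wL _ _ _ hv _ e_gt1 pi0 vpi); split.
- exact: dim_L.
- exact: dval_wL.
- exact: wL_alg.
- exact: L_no_restricting_ac p_pr erefl (char0 p (prime_gt0 p_pr)) vp.
Qed.
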